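(* Let $a_{01},a_{10}>0$, $a_\triangle=a_{01}+a_{10}$, and let $x_\triangle\ge0$ be a fixed integer (prior swing count). Let $h(k\mid m,\theta)=\binom{m}{k}\theta^k(1-\theta)^{m-k}$, and let $p_H(\theta)=\mathrm{Beta}(\theta\mid a_{01},a_{10})$. Define the conditionally-intrinsic prior $$p^{CI}_H(\theta\mid H_0)=p_H(\theta)\,E_\theta\!\left[\frac{h(x_{01}\mid x_\triangle,1/2)}{\int_0^1h(x_{01}\mid x_\triangle,t)p_H(t)\,dt}\right],$$ the expectation being over $x_{01}\sim h(\cdot\mid x_\triangle,\theta)$. Let observed data consist of integers $0\le n_{01}\le n_\triangle$, and define $m^{Co}_{H_0}(n)=h(n_{01}\mid n_\triangle,1/2)$, $m^{CI}_H(n)=\int_0^1h(n_{01}\mid n_\triangle,\theta)p^{CI}_H(\theta\mid H_0)\,d\theta$ and $BF^{CI}_{H,H_0}(n)=m^{CI}_H(n)/m^{Co}_{H_0}(n)$. Then $$BF^{CI}_{H,H_0}(n)=\sum_{x_{01}=0}^{x_\triangle}\binom{x_\triangle}{x_{01}}\left(\frac12\right)^{x_\triangle}BF^{Co}_{H,H_0}(n\mid x),$$ where $$BF^{Co}_{H,H_0}(n\mid x)=2^{n_\triangle}\,\frac{B\big(a_{01}+x_{01}+n_{01},\,a_\triangle-a_{01}+x_\triangle-x_{01}+n_\triangle-n_{01}\big)}{B\big(a_{01}+x_{01},\,a_\triangle-a_{01}+x_\triangle-x_{01}\big)}.$$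
   Context: $B(A,B)=\int_0^1t^{A-1}(1-t)^{B-1}dt$ is the Beta function and $\mathrm{Beta}(\theta\mid A,B)=\theta^{A-1}(1-\theta)^{B-1}/B(A,B)$ the Beta density. $H$ is the hypothesis $\theta\neq1/2$ and $H_0$ the hypothesis $\theta=1/2$, where $\theta$ is the success probability in the binomial model $h(n_{01}\mid n_\triangle,\theta)$ for the number $n_{01}$ of $0\to1$ swings among $n_\triangle$ total swings in a matched-pair $2\times2$ table. *)

From HB Require Import structures.
From mathcomp Require Import all_boot all_order all_algebra.
From mathcomp Require Import all_classical all_reals all_analysis.
Set Implicit Arguments. Unset Strict Implicit. Unset Printing Implicit Defensive.
Import Order.TTheory GRing.Theory Num.Theory.
Import numFieldNormedType.Exports.
Local Open Scope classical_set_scope.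
Local Open Scope ring_scope.

Section Defs.
Variable R : realType.

Definition leb := (@lebesgue_measure R).

Definition binom_pmf (k m : nat) (theta : R) : R :=
  ('C(m, k))%:R * theta ^+ k * (1 - theta) ^+ (m - k).

Definition betaF (A B : R) : R :=
  \int[leb]_(t in `[0%R, 1%R]) (t `^ (A - 1) * (1 - t) `^ (B - 1)).

Definition beta_dens (A B : R) (theta : R) : R :=
  theta `^ (A - 1) * (1 - theta) `^ (B - 1) / betaF A B.

Definition pH (a01 a10 : R) (theta : R) : R := beta_dens a01 a10 theta.

Definition marg_H (a01 a10 : R) (xT x01 : nat) : R :=
  \int[leb]_(t in `[0%R, 1%R]) (binom_pmf x01 xT t * pH a01 a10 t).

Definition pCI (a01 a10 : R) (xT : nat) (theta : R) : R :=
  pH a01 a10 theta *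
  \sum_(x01 < xT.+1)
     binom_pmf x01 xT theta *
     (binom_pmf x01 xT (1 / 2) / marg_H a01 a10 xT x01).

Definition mCo_H0 (n01 nT : nat) : R := binom_pmf n01 nT (1 / 2).

Definition mCI_H (a01 a10 : R) (xT n01 nT : nat) : R :=
  \int[leb]_(theta in `[0%R, 1%R]) (binom_pmf n01 nT theta * pCI a01 a10 xT theta).

Definition BF_CI (a01 a10 : R) (xT n01 nT : nat) : R :=
  mCI_H a01 a10 xT n01 nT / mCo_H0 n01 nT.

Definition BF_Co (a01 aT : R) (xT x01 n01 nT : nat) : R :=
  2 ^+ nT *
  (betaF (a01 + x01%:R + n01%:R)
         (aT - a01 + xT%:R - x01%:R + nT%:R - n01%:R)
   / betaF (a01 + x01%:R) (aT - a01 + xT%:R - x01%:R)).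

End Defs.

From HB Require Import structures.
From mathcomp Require Import all_boot all_order all_algebra.
From mathcomp Require Import all_classical all_reals all_analysis.
From mathcomp Require Import measurable_realfun ring lra.
Import Order.TTheory GRing.Theory Num.Theory.
Import numFieldNormedType.Exports.
Local Open Scope classical_set_scope.
Local Open Scope ring_scope.

(* Everything rests on Beta-binomial conjugacy: for t in [0,1],
   t^(A-1) (1-t)^(B-1) * t^k (1-t)^(m-k) = t^(A+k-1) (1-t)^(B+m-k-1), so
   each prior marginal of x01 is C(xT,x01) B(a01+x01, a10+xT-x01) / B(a01,a10),
   and the integrand of m^CI_H is a finite combination of Beta integrands that
   can be integrated term by term. The analytic input is that for A, B > 0 the
   Beta integrand is integrable with positive integral: it is dominated by a
   multiple of t^(A-1) + (1-t)^(B-1), whose integrals over the half-open unit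
   interval are monotone limits of integrals over [c,1] given by the FTC. *)

Section integral_lemmas.
Context d (T : measurableType d) (R : realType) (mu : {measure set T -> \bar R}).

Lemma Rintegral_sum (D : set T) (I : Type) (s : seq I) (f : I -> T -> R) :
  measurable D -> (forall i, mu.-integrable D (EFin \o f i)) ->
  \int[mu]_(x in D) (\sum_(i <- s) f i x) = \sum_(i <- s) \int[mu]_(x in D) f i x.
Proof.
move=> mD intf; rewrite /Rintegral.
under eq_integral do rewrite -sumEFin.
rewrite integral_sum // sum_fine // => i _.
by apply: integrable_fin_num => //; exact: intf.
Qed.

Lemma Rintegral_sumZ (D : set T) (I : Type) (s : seq I) (c : I -> R) (f : I -> T -> R) :
  measurable D -> (forall i, mu.-integrable D (EFin \o f i)) ->
  \int[mu]_(x in D) (\sum_(i <- s) c i * f i x) =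
  \sum_(i <- s) c i * \int[mu]_(x in D) f i x.
Proof.
move=> mD intf; rewrite Rintegral_sum // => [|i].
  by apply: eq_bigr => i _; rewrite RintegralZl.
apply: (eq_integrable mD (fun x => (c i)%:E * (f i x)%:E)%E).
  by move=> x _; rewrite /= EFinM.
exact: integrableZl mD _ _ (intf i).
Qed.

Lemma ge0_integral_bigcup_le (F : (set T)^nat) (f : T -> R) (M : R) :
  nondecreasing_seq F -> (forall i, measurable (F i)) ->
  (forall i, measurable_fun (F i) f) -> (forall i x, F i x -> 0 <= f x) ->
  (forall i, (\int[mu]_(x in F i) (f x)%:E <= M%:E)%E) ->
  (\int[mu]_(x in \bigcup_i F i) (f x)%:E <= M%:E)%E.
Proof.
move=> ndF mF mf f0 bound.
have := @ge0_nondecreasing_set_cvg_integral _ T R F (EFin \o f) mu ndF mF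
  (fun i => ltac:(apply/measurable_EFinP; exact: mf))
  (fun i x Fx => (f0 i x Fx : (0 <= (f x)%:E)%E)).
move=> cvgF; rewrite -(cvg_lim _ cvgF) //.
apply: lime_le; first by apply/cvg_ex; eexists; exact: cvgF.
exact: nearW.
Qed.

End integral_lemmas.

Section powR_integrals.
Context {R : realType}.
Local Notation mu := (@lebesgue_measure R).

Lemma continuous_powR (r x : R) : 0 < x -> {for x, continuous (fun y : R => y `^ r)}.
Proof.
move=> x_gt0; apply: differentiable_continuous; apply/derivable1_diffP.
by apply: derivable_powR; rewrite in_itv /= x_gt0.
Qed.

Lemma measurable_onem_powR (r : R) : measurable_fun setT (fun x : R => (1 - x) `^ r).
Proof.
apply: (@measurableT_comp _ _ _ _ _ _ (@powR R ^~ r)); first exact: measurable_powR.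
by apply: measurable_funB => //; exact: measurable_cst.
Qed.

Lemma integral_powR_itvcc (r c : R) : -1 < r -> 0 < c -> c < 1 ->
  (\int[mu]_(x in `[c, 1%R]) (x `^ r)%:E = ((1 - c `^ (r + 1)) / (r + 1))%:E)%E.
Proof.
move=> r_gtN1 c_gt0 c_lt1.
have r1_gt0 : 0 < r + 1 by lra.
pose F x := (r + 1)^-1 * x `^ (r + 1).
have dF (x : R) : 0 < x -> is_derive x 1 F ((r + 1)^-1 * ((r + 1) * x `^ (r + 1 - 1))).
  by move=> x_gt0; apply: is_deriveZ; exact: is_derive1_powR.
have cF (x : R) : 0 < x -> {for x, continuous F}.
  by move=> x_gt0; apply: continuousM; [exact: cvg_cst | exact: continuous_powR].
rewrite (@continuous_FTC2 _ _ F) //.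
- by rewrite /F powR1 -EFinB; congr (_%:E); field; lra.
- apply: continuous_in_subspaceT => x; rewrite inE /= in_itv /= => /andP[cx _].
  by apply: continuous_powR; exact: lt_le_trans cx.
- split.
  + move=> x; rewrite in_itv /= => /andP[cx _].
    by have [] := dF x (lt_trans c_gt0 cx).
  + by apply: cvg_at_right_filter; apply: cF.
  + by apply: cvg_at_left_filter; apply: cF.
- move=> x; rewrite in_itv /= => /andP[cx _].
  have x_gt0 : 0 < x := lt_trans c_gt0 cx.
  rewrite derive1E (@derive_val _ _ _ _ _ _ _ (dF x x_gt0)) addrK mulrA.
  by rewrite mulVf ?mul1r // gt_eqF.
Qed.

Lemma integral_powR_itvoc_le (r : R) : -1 < r ->
  (\int[mu]_(x in `]0%R, 1%R]) (x `^ r)%:E <= ((r + 1)^-1)%:E)%E.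
Proof.
move=> r_gtN1.
pose F i := `[(i.+2%:R : R)^-1, 1%R]%classic.
have -> : `]0%R, 1%R]%classic = \bigcup_i F i.
  apply/seteqP; split => x /=.
    rewrite in_itv /= => /andP[x_gt0 x_le1].
    have [k Hk] := ltr_add_invr x_gt0; exists k.+1 => //.
    rewrite /F /= in_itv /= x_le1 andbT; rewrite add0r in Hk.
    apply: ltW; apply: le_lt_trans Hk.
    by rewrite lef_pV2 ?posrE ?ltr0n // ler_nat ltnS; exact: leqW (leqnSn k).
  move=> [i _]; rewrite /F /= !in_itv /= => /andP[ix ->]; rewrite andbT.
  by apply: lt_le_trans ix; rewrite invr_gt0 ltr0n.
apply: ge0_integral_bigcup_le.
- move=> i j ij; rewrite subsetEset => x; rewrite /F /= !in_itv /= => /andP[ix ->].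
  by rewrite andbT; apply: le_trans ix; rewrite lef_pV2 ?posrE ?ltr0n // ler_nat.
- by move=> i; exact: measurable_itv.
- by move=> i; apply: measurable_funTS; exact: measurable_powR.
- by move=> i x _; exact: powR_ge0.
- move=> i; rewrite integral_powR_itvcc //; last by rewrite invf_lt1 ?ltr1n // ltr0n.
  by rewrite lee_fin -[leRHS]mul1r ler_wpM2r ?gerBl ?powR_ge0 // invr_ge0; lra.
Qed.

Lemma integral_onem_powR_itvco_le (r : R) : -1 < r ->
  (\int[mu]_(x in `[0%R, 1%R[) ((1 - x) `^ r)%:E <= ((r + 1)^-1)%:E)%E.
Proof.
move=> r_gtN1.
pose F i := `[0%R, 1 - (i.+2%:R : R)^-1]%classic.
have -> : `[0%R, 1%R[%classic = \bigcup_i F i.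
  apply/seteqP; split => x /=.
    rewrite in_itv /= => /andP[x_ge0 x_lt1].
    have [k Hk] : exists k, 0 + k.+1%:R^-1 < 1 - x by apply: ltr_add_invr; lra.
    rewrite add0r in Hk; exists k.+1 => //.
    rewrite /F /= in_itv /= x_ge0 /= lerBrDr -lerBrDl.
    apply: ltW; apply: le_lt_trans Hk.
    by rewrite lef_pV2 ?posrE ?ltr0n // ler_nat ltnS; exact: leqW (leqnSn k).
  move=> [i _]; rewrite /F /= !in_itv /= => /andP[-> xi] /=.
  by apply: (le_lt_trans xi); rewrite gtrBl invr_gt0 ltr0n.
apply: ge0_integral_bigcup_le.
- move=> i j ij; rewrite subsetEset => x; rewrite /F /= !in_itv /= => /andP[-> ix] /=.
  apply: (le_trans ix); apply: lerB => //.
  by rewrite lef_pV2 ?posrE ?ltr0n // ler_nat.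
- by move=> i; exact: measurable_itv.
- by move=> i; apply: measurable_funTS; exact: measurable_onem_powR.
- by move=> i x _; exact: powR_ge0.
- move=> i; rewrite /F.
  have c_gt0 : 0 < (i.+2%:R : R)^-1 by rewrite invr_gt0 ltr0n.
  have c_lt1 : (i.+2%:R : R)^-1 < 1 by rewrite invf_lt1 ?ltr1n // ltr0n.
  rewrite (integration_by_substitution_onem (G := fun x : R => (1 - x) `^ r));
    last 2 first.
  - by rewrite subr_ge0 gerBl !ltW.
  - apply: continuous_in_subspaceT => x; rewrite inE /= in_itv /= => /andP[_ xc].
    apply: (@continuous_comp _ _ _ (fun y : R => 1 - y) (fun y : R => y `^ r)).
      by apply: continuousB => //; exact: cvg_cst.
    by apply: continuous_powR; rewrite subr_gt0 (le_lt_trans xc) // gtrBl.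
  under eq_integral do rewrite subKr.
  apply: (le_trans _ (integral_powR_itvoc_le _ r_gtN1)).
  apply: ge0_subset_integral => //=.
  - by apply/measurable_EFinP; apply: measurable_funTS; exact: measurable_powR.
  - by move=> x _; rewrite lee_fin powR_ge0.
  - move=> x; rewrite /= !in_itv /= => /andP[cx ->]; rewrite andbT.
    apply: lt_le_trans cx; change (0 < 1 - (1 - (i.+2%:R : R)^-1)).
    by rewrite subKr.
Qed.

Lemma integrable_powR (r : R) : -1 < r ->
  mu.-integrable `[0%R, 1%R] (EFin \o (fun x : R => x `^ r)).
Proof.
move=> r_gtN1; apply/integrableP; split.
  by apply/measurable_EFinP; apply: measurable_funTS; exact: measurable_powR.
under eq_integral do rewrite /= ger0_norm ?powR_ge0 //.
rewrite -integral_itv_obnd_cbnd; last first.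
  by apply/measurable_EFinP; apply: measurable_funTS; exact: measurable_powR.
exact: le_lt_trans (integral_powR_itvoc_le _ r_gtN1) (ltry _).
Qed.

Lemma integrable_onem_powR (r : R) : -1 < r ->
  mu.-integrable `[0%R, 1%R] (EFin \o (fun x : R => (1 - x) `^ r)).
Proof.
move=> r_gtN1; apply/integrableP; split.
  by apply/measurable_EFinP; apply: measurable_funTS; exact: measurable_onem_powR.
under eq_integral do rewrite /= ger0_norm ?powR_ge0 //.
rewrite -integral_itv_bndo_bndc; last first.
  by apply/measurable_EFinP; apply: measurable_funTS; exact: measurable_onem_powR.
exact: le_lt_trans (integral_onem_powR_itvco_le _ r_gtN1) (ltry _).
Qed.

End powR_integrals.

Section beta_kernel.
Context {R : realType}.
Local Notation mu := (@lebesgue_measure R).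

Definition beta_kernel (A B t : R) : R := t `^ (A - 1) * (1 - t) `^ (B - 1).

Lemma beta_kernel_ge0 (A B t : R) : 0 <= beta_kernel A B t.
Proof. by rewrite mulr_ge0 // powR_ge0. Qed.

Lemma measurable_beta_kernel (A B : R) : measurable_fun setT (beta_kernel A B).
Proof.
by apply: measurable_funM; [exact: measurable_powR | exact: measurable_onem_powR].
Qed.

Lemma ler_powR_npos (s x y : R) : s <= 0 -> 0 < x -> x <= y -> y `^ s <= x `^ s.
Proof.
move=> s_le0 x_gt0 xy; have y_gt0 : 0 < y := lt_le_trans x_gt0 xy.
rewrite -(opprK s) !(powRN _ (- s)) lef_pV2 ?posrE ?powR_gt0 //.
by apply: ge0_ler_powR; rewrite ?nnegrE; lra.
Qed.

Lemma powR_le_max (s c u : R) : 0 < c -> c <= u -> u <= 1 -> u `^ s <= Num.max 1 (c `^ s).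
Proof.
move=> c_gt0 cu u_le1; rewrite le_max; have [s_ge0|s_lt0] := leP 0 s.
  apply/orP; left; apply: (@le_trans _ _ (1 `^ s)); last by rewrite powR1.
  by apply: ge0_ler_powR; rewrite ?nnegrE; lra.
by apply/orP; right; apply: ler_powR_npos => //; exact: ltW.
Qed.

Lemma powR_ge_min (s c u : R) : 0 < c -> c <= u -> u <= 1 -> Num.min 1 (c `^ s) <= u `^ s.
Proof.
move=> c_gt0 cu u_le1; rewrite ge_min; have [s_ge0|s_lt0] := leP 0 s.
  by apply/orP; right; apply: ge0_ler_powR; rewrite ?nnegrE; lra.
apply/orP; left; apply: (@le_trans _ _ (1 `^ s)); first by rewrite powR1.
by apply: ler_powR_npos; [exact: ltW | lra | lra].
Qed.

Lemma beta_kernel_le (A B t : R) : 0 <= t <= 1 ->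
  beta_kernel A B t <= Num.max 1 (2^-1 `^ (B - 1)) * t `^ (A - 1) +
                       Num.max 1 (2^-1 `^ (A - 1)) * (1 - t) `^ (B - 1).
Proof.
move=> /andP[t_ge0 t_le1]; rewrite /beta_kernel.
have max_ge0 (s : R) : 0 <= Num.max 1 (2^-1 `^ s) by rewrite le_max ler01.
have [t_le_half|t_gt_half] := leP t 2^-1.
  apply: (@le_trans _ _ (Num.max 1 (2^-1 `^ (B - 1)) * t `^ (A - 1))).
    by rewrite mulrC ler_wpM2r ?powR_ge0 // powR_le_max //; lra.
  by rewrite lerDl mulr_ge0 ?powR_ge0.
apply: (@le_trans _ _ (Num.max 1 (2^-1 `^ (A - 1)) * (1 - t) `^ (B - 1))).
  by rewrite ler_wpM2r ?powR_ge0 // powR_le_max //; lra.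
by rewrite lerDr mulr_ge0 ?powR_ge0.
Qed.

Lemma integrable_beta_kernel (A B : R) : 0 < A -> 0 < B ->
  mu.-integrable `[0%R, 1%R] (EFin \o beta_kernel A B).
Proof.
move=> A_gt0 B_gt0.
have m01 : measurable (`[0%R, 1%R] : set (measurableTypeR R)) by exact: measurable_itv.
set MA := Num.max 1 (2^-1 `^ (A - 1)); set MB := Num.max 1 (2^-1 `^ (B - 1)).
have int_bound := integrableD m01
  (integrableZl m01 MB (integrable_powR (A - 1) ltac:(lra)))
  (integrableZl m01 MA (integrable_onem_powR (B - 1) ltac:(lra))).
apply: (le_integrable m01 _ _ int_bound).
  by apply/measurable_EFinP; apply: measurable_funTS; exact: measurable_beta_kernel.
move=> t; rewrite /= in_itv /= => t01.
rewrite lee_fin !ger0_norm ?beta_kernel_ge0 //.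
  exact: beta_kernel_le.
by rewrite addr_ge0 // mulr_ge0 ?powR_ge0 // le_max ler01.
Qed.

Lemma integral_beta_kernel_gt0 (A B : R) :
  (0 < \int[mu]_(t in `[0%R, 1%R]) (beta_kernel A B t)%:E)%E.
Proof.
set c := Num.min 1 (4^-1 `^ (A - 1)) * Num.min 1 (4^-1 `^ (B - 1)).
have c_gt0 : 0 < c by rewrite mulr_gt0 // lt_min ltr01 powR_gt0.
apply: (@lt_le_trans _ _ (\int[mu]_(t in `[(4^-1)%R, (3/4)%R]) c%:E)%E).
  rewrite integral_cst //= lebesgue_measure_itv /= lte_fin.
  have -> : (4^-1 : R) < 3/4 by lra.
  by rewrite -EFinB -EFinM lte_fin mulr_gt0 //; lra.
apply: (@le_trans _ _ (\int[mu]_(t in `[(4^-1)%R, (3/4)%R]) (beta_kernel A B t)%:E)%E).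
  apply: ge0_le_integral => //=.
  - by move=> t _; rewrite lee_fin ltW.
  - by apply/measurable_EFinP; apply: measurable_funTS; exact: measurable_beta_kernel.
  - move=> t; rewrite /= in_itv /= => /andP[t_ge t_le].
    by rewrite lee_fin ler_pM ?powR_ge_min ?ge_min ?ler01 //; lra.
apply: ge0_subset_integral => //=.
- by apply/measurable_EFinP; apply: measurable_funTS; exact: measurable_beta_kernel.
- by move=> t _; rewrite lee_fin beta_kernel_ge0.
- by move=> t; rewrite /= !in_itv /= => /andP[? ?]; apply/andP; split; lra.
Qed.

Lemma betaF_gt0 (A B : R) : 0 < A -> 0 < B -> 0 < betaF A B.
Proof.
move=> A_gt0 B_gt0; rewrite -lte_fin /betaF /Rintegral fineK.
  exact: integral_beta_kernel_gt0.
by apply: integrable_fin_num; [exact: measurable_itv | exact: integrable_beta_kernel].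
Qed.

Lemma powR_addn (t a : R) (k : nat) : 0 <= t -> 0 < a ->
  t `^ (a + k%:R - 1) = t `^ (a - 1) * t ^+ k.
Proof.
move=> t_ge0 a_gt0; case: k => [|k]; first by rewrite addr0 expr0 mulr1.
have [->|t_neq0] := eqVneq t 0.
  have k1 : (1 : R) <= k.+1%:R by rewrite ler1n.
  by rewrite expr0n /= mulr0 powR0 // gt_eqF //; lra.
rewrite -powR_mulrn // -powRD; last by rewrite t_neq0 implybT.
by congr (_ `^ _); ring.
Qed.

Lemma beta_kernel_shift (A B t : R) (k l : nat) : 0 < A -> 0 < B -> 0 <= t <= 1 ->
  beta_kernel (A + k%:R) (B + l%:R) t = beta_kernel A B t * (t ^+ k * (1 - t) ^+ l).
Proof.
move=> A_gt0 B_gt0 /andP[t_ge0 t_le1].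
by rewrite /beta_kernel !powR_addn // ?subr_ge0 //; ring.
Qed.

Lemma binom_pmf_beta_kernel (k m : nat) (A B t : R) : 0 < A -> 0 < B -> 0 <= t <= 1 ->
  binom_pmf k m t * beta_kernel A B t =
  'C(m, k)%:R * beta_kernel (A + k%:R) (B + (m - k)%:R) t.
Proof. by move=> A_gt0 B_gt0 t01; rewrite beta_kernel_shift // /binom_pmf; ring. Qed.

End beta_kernel.

Lemma binom_pmf_half {R : realType} (k m : nat) : (k <= m)%N ->
  binom_pmf k m (1 / 2 : R) = 'C(m, k)%:R * (1 / 2) ^+ m.
Proof.
move=> km; rewrite /binom_pmf.
have -> : 1 - 1 / 2 = 1 / 2 :> R by field.
by rewrite -mulrA -exprD subnKC.
Qed.

Section bayes_factor.
Context {R : realType}.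
Variables (a01 a10 : R) (xT n01 nT : nat).
Hypotheses (a01_gt0 : 0 < a01) (a10_gt0 : 0 < a10).

Lemma marg_HE (x : nat) :
  marg_H a01 a10 xT x =
  'C(xT, x)%:R * betaF (a01 + x%:R) (a10 + (xT - x)%:R) / betaF a01 a10.
Proof.
have ax_gt0 : 0 < a01 + x%:R by rewrite ltr_wpDr.
have bx_gt0 : 0 < a10 + (xT - x)%:R by rewrite ltr_wpDr.
rewrite mulrAC -RintegralZl //; last exact: integrable_beta_kernel.
apply: eq_Rintegral => t; rewrite inE /= in_itv /= => t01.
by rewrite /pH /beta_dens mulrA -/(beta_kernel _ _ _) binom_pmf_beta_kernel // mulrAC.
Qed.

Let A' (x : nat) := a01 + x%:R + n01%:R.
Let B' (x : nat) := a10 + (xT - x)%:R + (nT - n01)%:R.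
Let coef (x : nat) := binom_pmf x xT (1 / 2) / marg_H a01 a10 xT x *
  'C(nT, n01)%:R * 'C(xT, x)%:R / betaF a01 a10.

Lemma binom_pmf_pCI : {in `[0%R, 1%R]%classic,
  (fun t => binom_pmf n01 nT t * pCI a01 a10 xT t) =1
  (fun t => \sum_(x < xT.+1) coef x * beta_kernel (A' x) (B' x) t)}.
Proof.
move=> t; rewrite inE /= in_itv /= => t01.
rewrite /pCI mulr_sumr mulr_sumr; apply: eq_bigr => x _.
have ax_gt0 : 0 < a01 + x%:R by rewrite ltr_wpDr.
have bx_gt0 : 0 < a10 + (xT - x)%:R by rewrite ltr_wpDr.
rewrite /A' /B' beta_kernel_shift // beta_kernel_shift //.
by rewrite /coef /pH /beta_dens /binom_pmf /beta_kernel; ring.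
Qed.

Lemma mCI_HE :
  mCI_H a01 a10 xT n01 nT = \sum_(x < xT.+1) coef x * betaF (A' x) (B' x).
Proof.
rewrite /mCI_H (eq_Rintegral (@leb R) binom_pmf_pCI) Rintegral_sumZ //.
by move=> x; apply: integrable_beta_kernel; rewrite /A' /B' -addrA ltr_wpDr // addr_ge0.
Qed.

Lemma coef_betaF_BF_Co (x : nat) : (x <= xT)%N -> (n01 <= nT)%N ->
  coef x * betaF (A' x) (B' x) / binom_pmf n01 nT (1 / 2) =
  'C(xT, x)%:R * (1 / 2) ^+ xT * BF_Co a01 (a01 + a10) xT x n01 nT.
Proof.
move=> x_le n01_le.
have e1 : a01 + a10 - a01 + xT%:R - x%:R + nT%:R - n01%:R = B' x.
  by rewrite /B' !natrB //; ring.
have e2 : a01 + a10 - a01 + xT%:R - x%:R = a10 + (xT - x)%:R.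
  by rewrite natrB //; ring.
have ax_gt0 : 0 < a01 + x%:R by rewrite ltr_wpDr.
have bx_gt0 : 0 < a10 + (xT - x)%:R by rewrite ltr_wpDr.
have Cx_neq0 : 'C(xT, x)%:R != 0 :> R by rewrite pnatr_eq0 -lt0n bin_gt0.
have Cn_neq0 : 'C(nT, n01)%:R != 0 :> R by rewrite pnatr_eq0 -lt0n bin_gt0.
rewrite /coef marg_HE !binom_pmf_half // /BF_Co e1 e2 !expr_div_n !expr1n.
field.
by rewrite Cx_neq0 Cn_neq0 !expf_neq0 ?pnatr_eq0 //= !gt_eqF ?betaF_gt0.
Qed.

End bayes_factor.

Theorem proposition6 (R : realType) (a01 a10 : R) (xT n01 nT : nat) :
  0 < a01 -> 0 < a10 -> (n01 <= nT)%N ->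
  BF_CI a01 a10 xT n01 nT =
  \sum_(x01 < xT.+1)
     ('C(xT, x01))%:R * (1 / 2) ^+ xT * BF_Co a01 (a01 + a10) xT x01 n01 nT.
Proof.
move=> a01_gt0 a10_gt0 n01_le.
rewrite /BF_CI /mCo_H0 mCI_HE // mulr_suml; apply: eq_bigr => x _.
by rewrite coef_betaF_BF_Co // -ltnS.
Qed.
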